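(* Let $x \in \mathbb{Z}$ and let $n \in \mathbb{N}$ be odd with $n \geq 5$, and suppose $x^2 + 7 = 2^n$. Then $n - 2 \equiv 3$, $5$, or $13 \pmod{42}$. *)

From Stdlib Require Import ZArith.

(* Write x = 2c + 1 and let ω = (1 + sqrt(-7))/2, so that ω^2 = ω - 2 and
   N(a + b ω) = a^2 + a b + 2 b^2 is the norm of Z[ω]; the equation becomes
   N(c + ω) = 2^m with m = n - 2.  Since 2 = ω conj(ω), an element of norm
   2^(m+1) not divisible by 2 is divisible by ω or by conj(ω), and dividing
   step by step shows that it equals ±ω^m or ±conj(ω)^m.  Hence the
   ω-coordinate b_m of ω^m is ±1.  The sequence b satisfies
   b_(m+2) = b_(m+1) - 2 b_m: modulo 4 this excludes b_m = 1 for odd m >= 3,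
   and modulo 7 it has period 21 and hits -1 only at m = 3, 5, 13 in a period,
   which for odd m gives the residues of m modulo 42. *)

From Stdlib Require Import ZArith Lia.
Open Scope Z_scope.

Lemma recurrence_divide (c1 c2 d : Z) (f g : nat -> Z) :
  (forall m, f (S (S m)) = c1 * f (S m) + c2 * f m) ->
  (forall m, g (S (S m)) = c1 * g (S m) + c2 * g m) ->
  (d | f 0%nat - g 0%nat) -> (d | f 1%nat - g 1%nat) ->
  forall m, (d | f m - g m).
Proof.
  intros Hf Hg H0 H1.
  enough (Hpair : forall m, (d | f m - g m) /\ (d | f (S m) - g (S m)))
    by (intro m; apply Hpair).
  induction m as [|m [IH IHS]]; [split; assumption|].
  split; [assumption|].
  replace (f (S (S m)) - g (S (S m)))
    with (c1 * (f (S m) - g (S m)) + c2 * (f m - g m))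
    by (rewrite Hf, Hg; ring).
  apply Z.divide_add_r; apply Z.divide_mul_r; assumption.
Qed.

Lemma periodic_divide (d : Z) (p : nat) (h : nat -> Z) :
  (forall m, (d | h (m + p)%nat - h m)) ->
  forall k r, (d | h (r + k * p)%nat - h r).
Proof.
  intros Hper k r. induction k as [|k IH].
  - rewrite Nat.mul_0_l, Nat.add_0_r, Z.sub_diag. apply Z.divide_0_r.
  - replace (r + S k * p)%nat with (r + k * p + p)%nat by lia.
    replace (h (r + k * p + p)%nat - h r)
      with ((h (r + k * p + p)%nat - h (r + k * p)%nat) + (h (r + k * p)%nat - h r))
      by ring.
    apply Z.divide_add_r; [apply Hper | exact IH].
Qed.

Lemma pow2_of_nat_S (m : nat) : 2 ^ Z.of_nat (S m) = 2 * 2 ^ Z.of_nat m.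
Proof. rewrite Nat2Z.inj_succ, Z.pow_succ_r by lia. reflexivity. Qed.

(* Coordinates of ω^m in the basis (1, ω) of Z[ω]; since ω^2 = ω - 2,
   (a + b ω) ω = -2 b + (a + b) ω. *)
Fixpoint omega_pow (m : nat) : Z * Z :=
  match m with
  | O => (1, 0)
  | S m => let (a, b) := omega_pow m in (-2 * b, a + b)
  end.

Definition omega_a (m : nat) : Z := fst (omega_pow m).
Definition omega_b (m : nat) : Z := snd (omega_pow m).

Lemma omega_a_S (m : nat) : omega_a (S m) = -2 * omega_b m.
Proof. unfold omega_a, omega_b; cbn. destruct (omega_pow m); reflexivity. Qed.

Lemma omega_b_S (m : nat) : omega_b (S m) = omega_a m + omega_b m.
Proof. unfold omega_a, omega_b; cbn. destruct (omega_pow m); reflexivity. Qed.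

Lemma omega_b_rec (m : nat) :
  omega_b (S (S m)) = 1 * omega_b (S m) + (-2) * omega_b m.
Proof. rewrite (omega_b_S (S m)), omega_a_S. ring. Qed.

Lemma omega_a_even (m : nat) : (0 < m)%nat -> Z.Even (omega_a m).
Proof.
  destruct m as [|m]; [lia|]. intros _.
  rewrite omega_a_S. exists (- omega_b m). ring.
Qed.

Definition omega_norm (a b : Z) : Z := a * a + a * b + 2 * b * b.

Lemma omega_norm_conj (a b : Z) : omega_norm (a + b) (- b) = omega_norm a b.
Proof. unfold omega_norm. ring. Qed.

Definition not_both_even (a b : Z) : Prop := ~ (Z.Even a /\ Z.Even b).

(* a + b ω = ±ω^m or ±conj(ω)^m; conjugation ω ↦ 1 - ω acts on coordinates
   as (a, b) ↦ (a + b, -b). *)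
Definition pm_omega_pow_or_conj (m : nat) (a b : Z) : Prop :=
  exists s, (s = 1 \/ s = -1) /\
    ((a = s * omega_a m /\ b = s * omega_b m) \/
     (a = s * (omega_a m + omega_b m) /\ b = - s * omega_b m)).

Lemma pm_omega_pow_or_conj_conj (m : nat) (a b : Z) :
  pm_omega_pow_or_conj m a b -> pm_omega_pow_or_conj m (a + b) (- b).
Proof.
  intros [s [Hs [[Ha Hb] | [Ha Hb]]]]; exists s; split; [assumption| |assumption|];
    [right | left]; lia.
Qed.

Lemma pm_omega_pow_or_conj_0 (a b : Z) :
  omega_norm a b = 1 -> pm_omega_pow_or_conj 0 a b.
Proof.
  unfold omega_norm. intros Hnorm.
  assert (Hb : b = 0).
  { assert (H4 : (2 * a + b) * (2 * a + b) + 7 * (b * b) = 4) by lia. nia. }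
  subst b.
  assert (Ha : (a - 1) * (a + 1) = 0) by lia.
  apply Z.mul_eq_0 in Ha.
  exists a. split; [lia|]. left. cbn. lia.
Qed.

(* Division by ω: 2c + b ω = ω ((c + b) - c ω). *)
Lemma pm_omega_pow_or_conj_S_even (m : nat) (a b : Z) :
  (forall p q, omega_norm p q = 2 ^ Z.of_nat m -> not_both_even p q ->
     pm_omega_pow_or_conj m p q) ->
  omega_norm a b = 2 ^ Z.of_nat (S m) -> not_both_even a b -> Z.Even a ->
  pm_omega_pow_or_conj (S m) a b.
Proof.
  intros IH Hnorm Hprim [c ->].
  rewrite pow2_of_nat_S in Hnorm.
  assert (Hnorm' : omega_norm (c + b) (- c) = 2 ^ Z.of_nat m)
    by (unfold omega_norm in *; lia).
  assert (Hprim' : not_both_even (c + b) (- c)).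
  { intros [[k Hk] [l Hl]]. apply Hprim. split; [exists c; reflexivity|].
    exists (k + l). lia. }
  destruct (IH _ _ Hnorm' Hprim') as [s [Hs [[Hp Hq] | [Hp Hq]]]].
  - exists s. split; [assumption|]. left.
    rewrite omega_a_S, omega_b_S. lia.
  - destruct m as [|m].
    + exists s. split; [assumption|]. left.
      cbv [omega_a omega_b omega_pow fst snd] in *. lia.
    + (* ω conj(ω)^(m+1) = 2 conj(ω)^m is divisible by 2 *)
      exfalso. destruct (omega_a_even (S m)) as [k Hk]; [lia|].
      apply Hprim. split.
      * exists (s * omega_b (S m)). lia.
      * exists (s * k). lia.
Qed.

Lemma pm_omega_pow_or_conj_of_norm (m : nat) (a b : Z) :
  omega_norm a b = 2 ^ Z.of_nat m -> not_both_even a b ->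
  pm_omega_pow_or_conj m a b.
Proof.
  revert a b. induction m as [|m IH]; intros a b Hnorm Hprim.
  - exact (pm_omega_pow_or_conj_0 a b Hnorm).
  - destruct (Z.Even_or_Odd a) as [Ha | [c Ha]].
    + exact (pm_omega_pow_or_conj_S_even m a b IH Hnorm Hprim Ha).
    + destruct (Z.Even_or_Odd b) as [[d Hb] | [d Hb]].
      * exfalso. rewrite pow2_of_nat_S in Hnorm. unfold omega_norm in Hnorm.
        subst a b. lia.
      * (* the conjugate (a + b) - b ω has even first coordinate *)
        assert (Hconj : pm_omega_pow_or_conj (S m) (a + b) (- b)).
        { apply (pm_omega_pow_or_conj_S_even m); [exact IH | | |].
          - rewrite omega_norm_conj. exact Hnorm.
          - intros [_ [k Hk]]. lia.
          - exists (c + d + 1). lia. }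
        apply pm_omega_pow_or_conj_conj in Hconj.
        rewrite Z.opp_involutive in Hconj.
        replace (a + b + - b) with a in Hconj by ring.
        exact Hconj.
Qed.

Lemma omega_b_of_norm (m : nat) (c : Z) :
  omega_norm c 1 = 2 ^ Z.of_nat m -> omega_b m = 1 \/ omega_b m = -1.
Proof.
  intros Hnorm.
  assert (Hprim : not_both_even c 1) by (intros [_ [k Hk]]; lia).
  destruct (pm_omega_pow_or_conj_of_norm m c 1 Hnorm Hprim) as
    [s [[-> | ->] [[_ Hb] | [_ Hb]]]]; lia.
Qed.

Lemma omega_b_odd_mod4 (k : nat) : (4 | omega_b (1 + k * 2 + 2) + 1).
Proof.
  assert (Hper : forall m, (4 | omega_b (m + 2 + 2) - omega_b (m + 2))).
  { apply (recurrence_divide 1 (-2) 4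
             (fun m => omega_b (m + 2 + 2)) (fun m => omega_b (m + 2))).
    1, 2: intro m; apply omega_b_rec.
    all: apply Z.mod_divide; [discriminate | reflexivity]. }
  pose proof (periodic_divide 4 2 (fun m => omega_b (m + 2)) Hper k 1) as H.
  change (omega_b (1 + 2)) with (-1) in H.
  replace (omega_b (1 + k * 2 + 2) + 1) with (omega_b (1 + k * 2 + 2) - -1) by ring.
  exact H.
Qed.

Lemma omega_b_odd_neq1 (m : nat) : Nat.Odd m -> (3 <= m)%nat -> omega_b m <> 1.
Proof.
  intros [k ->] Hm Hb.
  pose proof (omega_b_odd_mod4 (k - 1)) as [l Hl].
  replace (1 + (k - 1) * 2 + 2)%nat with (2 * k + 1)%nat in Hl by lia.
  lia.
Qed.

Lemma omega_b_period_mod7 (m : nat) : (7 | omega_b (m + 21) - omega_b m).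
Proof.
  apply (recurrence_divide 1 (-2) 7 (fun m => omega_b (m + 21)) omega_b).
  1, 2: intro k; apply omega_b_rec.
  all: apply Z.mod_divide; [discriminate | reflexivity].
Qed.

Lemma omega_b_neg1_mod7_small (r : nat) :
  (r < 21)%nat -> (7 | omega_b r + 1) -> (r = 3 \/ r = 5 \/ r = 13)%nat.
Proof.
  intros Hr H. apply Z.mod_divide in H; [|discriminate].
  do 21 (destruct r as [|r]; [vm_compute in H; lia|]).
  lia.
Qed.

Lemma omega_b_neg1_mod42 (m : nat) :
  Nat.Odd m -> omega_b m = -1 -> (m mod 42 = 3 \/ m mod 42 = 5 \/ m mod 42 = 13)%nat.
Proof.
  intros Hodd Hb.
  set (r := (m mod 21)%nat). set (q := (m / 21)%nat).
  assert (Hm : m = (r + q * 21)%nat) by (pose proof (Nat.div_mod_eq m 21); lia).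
  assert (Hr : (r < 21)%nat) by (apply Nat.mod_upper_bound; discriminate).
  assert (Hr7 : (r = 3 \/ r = 5 \/ r = 13)%nat).
  { apply omega_b_neg1_mod7_small; [exact Hr|].
    pose proof (periodic_divide 7 21 omega_b omega_b_period_mod7 q r) as H.
    rewrite <- Hm, Hb in H.
    replace (omega_b r + 1) with (- (-1 - omega_b r)) by ring.
    apply Z.divide_opp_r. exact H. }
  (* m and r are both odd, so the number q of periods is even *)
  destruct (Nat.Even_or_Odd q) as [[l Hl] | [l Hl]];
    [| destruct Hodd; exfalso; lia].
  replace m with (r + l * 42)%nat by lia.
  rewrite Nat.Div0.mod_add, Nat.mod_small by lia.
  exact Hr7.
Qed.

Theorem mainTheorem3 (x : Z) (n : nat)
  (Hodd : Nat.odd n = true) (Hn : (5 <= n)%nat)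
  (Heq : x ^ 2 + 7 = 2 ^ (Z.of_nat n)) :
  (Z.of_nat n - 2) mod 42 = 3 \/ (Z.of_nat n - 2) mod 42 = 5 \/
  (Z.of_nat n - 2) mod 42 = 13.
Proof.
  set (m := (n - 2)%nat).
  assert (Hm : Z.of_nat n - 2 = Z.of_nat m) by lia.
  assert (Hm_odd : Nat.Odd m).
  { apply Nat.odd_spec in Hodd as [k Hk]. exists (k - 1)%nat. lia. }
  rewrite <- (Z.sub_add 2 (Z.of_nat n)), Hm, Z.pow_add_r, !Z.pow_2_r in Heq by lia.
  destruct (Z.Even_or_Odd x) as [[c ->] | [c ->]]; [exfalso; lia|].
  assert (Hnorm : omega_norm c 1 = 2 ^ Z.of_nat m) by (unfold omega_norm; lia).
  destruct (omega_b_of_norm m c Hnorm) as [Hb | Hb].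
  { exfalso. exact (omega_b_odd_neq1 m Hm_odd ltac:(lia) Hb). }
  rewrite Hm. change 42 with (Z.of_nat 42). rewrite <- Nat2Z.inj_mod.
  destruct (omega_b_neg1_mod42 m Hm_odd Hb) as [-> | [-> | ->]]; auto.
Qed.
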